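(* Let $m$ be a positive integer and $c\in\mathbb{F}_{2^m}^*$. Then the polynomial \[ g(x)=x^{2^{m}(2^{2m}+1)}+x^{2^{2m}+1}+cx \] is a permutation polynomial of $\mathbb{F}_{2^{3m}}$.
   Context: A polynomial $f\in\mathbb{F}_Q[x]$ is a permutation polynomial of $\mathbb{F}_Q$ if the map $c\mapsto f(c)$ is a bijection of $\mathbb{F}_Q$. $\mathbb{F}_{2^m}$ is viewed as the subfield of $\mathbb{F}_{2^{3m}}$. *)

From HB Require Import structures.
From mathcomp Require Import all_boot all_order all_algebra all_field.
Set Implicit Arguments. Unset Strict Implicit. Unset Printing Implicit Defensive.
Import GRing.Theory.
Local Open Scope ring_scope.

Definition is_perm_poly (F : finFieldType) (f : {poly F}) : Prop :=
  bijective (fun x : F => f.[x]).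

(* Membership in the subfield F_{q} of a finite field: the elements fixed by
   x |-> x^q, i.e. the roots of X^q - X. *)
Definition in_subfield (F : finFieldType) (q : nat) (x : F) : bool :=
  x ^+ q == x.

From HB Require Import structures.
From mathcomp Require Import all_boot all_order all_algebra all_field.
From mathcomp Require Import ring.
Set Implicit Arguments. Unset Strict Implicit. Unset Printing Implicit Defensive.
Local Open Scope ring_scope.
Import GRing.Theory.

(* Let F = F_{q^3} with q = 2^m, let x^q be the Frobenius
   power generating Gal(F/F_q), and Tr x = x + x^q + x^(q^2) the relative
   trace onto F_q.  Since x^(q^3) = x, for every x
       g(x) = x * x^q + x^(q^2) * x + c x = x^2 + (Tr x + c) x     (char 2).
   Taking traces, Tr(g x) = (Tr x)^2 + (Tr x + c) Tr x = c Tr x, because the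
   trace is additive, commutes with squaring and is F_q-linear.  Hence
   g x = g y forces Tr x = Tr y (c != 0); with a = Tr x + c in F_q we get
   (x + y)(x + y + a) = 0, and y = x + a would give Tr y = Tr x + a, so a = 0.
   Thus g is injective, hence bijective on the finite field F. *)

Section CharTwo.
Variable F : finFieldType.
Hypothesis h2 : 2%N \in [pchar F].

Lemma exp2nD k (x y : F) : (x + y) ^+ (2 ^ k) = x ^+ (2 ^ k) + y ^+ (2 ^ k).
Proof.
apply: exprDn_pchar.
by rewrite pnatX (eq_pnat _ (pcharf_eq h2)) pnat_id.
Qed.

Lemma char2_add_eq0 (x y : F) : x + y = 0 -> x = y.
Proof. by move/eqP; rewrite addr_eq0 (oppr_pchar2 h2) => /eqP. Qed.

Lemma char2_quadratic_eq (a x y : F) :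
  x ^+ 2 + a * x = y ^+ 2 + a * y -> y = x \/ y = x + a.
Proof.
move=> Hxy.
have Hp : (x + y) * (x + y + a) = 0.
  have -> : (x + y) * (x + y + a)
            = (x ^+ 2 + a * x) + (y ^+ 2 + a * y) + (x * y + x * y) by ring.
  by rewrite Hxy !(addrr_pchar2 h2).
move/eqP: Hp; rewrite mulf_eq0 => /orP [/eqP/char2_add_eq0 -> | /eqP Hxya].
  by left.
right; apply: esym; apply: char2_add_eq0.
by rewrite -addrA (addrC a) addrA Hxya.
Qed.

(* F is viewed as a cubic extension of its subfield F_q, q = 2^m: the
   Frobenius power x |-> x^q has order dividing 3. *)
Variable m : nat.
Hypothesis frob3 : forall x : F, x ^+ (2 ^ m) ^+ (2 ^ m) ^+ (2 ^ m) = x.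

Definition frob (x : F) : F := x ^+ (2 ^ m).

Definition trace (x : F) : F := x + frob x + frob (frob x).

Lemma frobD (x y : F) : frob (x + y) = frob x + frob y.
Proof. exact: exp2nD. Qed.

Lemma frobM (x y : F) : frob (x * y) = frob x * frob y.
Proof. exact: exprMn. Qed.

Lemma frob_sqr (x : F) : frob (x ^+ 2) = frob x ^+ 2.
Proof. exact: exprAC. Qed.

Lemma frobK3 (x : F) : frob (frob (frob x)) = x.
Proof. exact: frob3. Qed.

Lemma traceD (x y : F) : trace (x + y) = trace x + trace y.
Proof. by rewrite /trace !frobD; ring. Qed.

Lemma trace_sqr (x : F) : trace (x ^+ 2) = trace x ^+ 2.
Proof. by rewrite /trace !frob_sqr !(exp2nD 1). Qed.

Lemma traceZ (a x : F) : frob a = a -> trace (a * x) = a * trace x.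
Proof. by move=> ha; rewrite /trace !frobM !ha !mulrDr. Qed.

Lemma frob_trace (x : F) : frob (trace x) = trace x.
Proof. by rewrite /trace !frobD frobK3; ring. Qed.

(* ... and is the identity on F_q, as [F_{q^3} : F_q] = 3 is odd. *)
Lemma trace_fixed (a : F) : frob a = a -> trace a = a.
Proof. by move=> ha; rewrite /trace !ha -addrA (addrr_pchar2 h2) addr0. Qed.

Definition gmap (c x : F) : F := x ^+ 2 + (trace x + c) * x.

Lemma trace_gmap (c x : F) : frob c = c -> trace (gmap c x) = c * trace x.
Proof.
move=> hc; rewrite /gmap traceD trace_sqr traceZ; last first.
  by rewrite frobD frob_trace hc.
by rewrite mulrDl -expr2 addrA (addrr_pchar2 h2) add0r mulrC.
Qed.

Lemma gmapE (c x : F) : gmap c x = x * frob x + frob (frob x) * x + c * x.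
Proof.
rewrite /gmap /trace; move: (frob x) (frob (frob x)) => u v.
have -> : x ^+ 2 + (x + u + v + c) * x = x * u + v * x + c * x + (x * x + x * x).
  by ring.
by rewrite (addrr_pchar2 h2) addr0.
Qed.

Lemma gmap_inj (c : F) : c != 0 -> frob c = c -> injective (gmap c).
Proof.
move=> hc0 hc x y Hxy.
have HT : trace x = trace y.
  by apply: (mulfI hc0); rewrite -!trace_gmap // Hxy.
set a := trace x + c.
have ha : frob a = a by rewrite frobD frob_trace hc.
have Hq : x ^+ 2 + a * x = y ^+ 2 + a * y.
  by move: Hxy; rewrite /gmap -HT -/a ![a * _]mulrC.
case: (char2_quadratic_eq Hq) => [-> // | Hy].
suff a0 : a = 0 by rewrite Hy a0 addr0.
have := HT; rewrite Hy traceD (trace_fixed ha) -{1}[trace x]addr0.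
by move/addrI.
Qed.

End CharTwo.

Lemma frob_order3 (F : finFieldType) (m : nat) :
  #|F| = (2 ^ (3 * m))%N -> forall x : F, x ^+ (2 ^ m) ^+ (2 ^ m) ^+ (2 ^ m) = x.
Proof.
move=> hF x; have e3 : (m + (m + m) = 3 * m)%N by rewrite !mulSn mul0n addn0.
by rewrite -!exprM -!expnD e3 -hF expf_card.
Qed.

Theorem corollary1 (F : finFieldType) (m : nat) (hm : (0 < m)%N)
  (hF : #|F| = (2 ^ (3 * m))%N)
  (c : F) (hc0 : c != 0) (hc : in_subfield (2 ^ m)%N c) :
  is_perm_poly ('X^(2 ^ m * (2 ^ (2 * m) + 1)) + 'X^(2 ^ (2 * m) + 1) + c *: 'X : {poly F}).
Proof.
have h2 : 2%N \in [pchar F] by apply: (card_finPcharP hF).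
have frob3 := frob_order3 hF.
have hcf : frob m c = c by apply/eqP.
have e2 (x : F) : x ^+ (2 ^ (2 * m)) = frob m (frob m x).
  by rewrite /frob mulSn mul1n expnD exprM.
(* Evaluating g uses x^(q^3 + q) = x * x^q. *)
have ev (x : F) : ('X^(2 ^ m * (2 ^ (2 * m) + 1)) + 'X^(2 ^ (2 * m) + 1)
                   + c *: 'X : {poly F}).[x] = gmap m c x.
  rewrite !hornerE exprM !exprD !expr1 !e2 -/(frob m x) (frobK3 frob3).
  by rewrite (gmapE h2).
apply: injF_bij => x y /=; rewrite !ev.
exact: (gmap_inj h2 frob3 hc0 hcf).
Qed.
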